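(* Let $N\ge 1$ and let $L_1,\dots,L_N$ and $K_1,\dots,K_N$ be positive integers with $K_n\le L_n$ for all $n$. Among all TTM-trees for these parameters (as defined in the context), there exists one of minimum cost that is binary, i.e., in which every node has at most two children.
   Context: A TTM-tree is a finite rooted tree with a labelling satisfying: (i) the root carries the special label ''input tensor''; (ii) there are exactly $N$ leaves, and the leaves are labelled bijectively by $\{1,\dots,N\}$ (leaf labelled $n$ stands for the new factor matrix of mode $n$); (iii) every internal node (a node that is neither the root nor a leaf) is labelled by a mode in $\{1,\dots,N\}$; (iv) for each leaf labelled $n$, the path from the root to that leaf contains exactly $N-1$ internal nodes, and every mode other than $n$ appears as a label on that path. Cost: define a cardinality $c(\cdot)$ top-down by $c(\text{root})=\prod_{j=1}^N L_j$, and for an internal node $u$ with label $n$ and parent $v$, $c(u)=(K_n/L_n)\,c(v)$; the cost of such an internal node is $K_n\,c(v)$. Leaves and the root have cost $0$. The cost of the tree is the sum of the costs of its internal nodes. (This models the number of floating-point operations of computing, for each mode $n$, the product of an $L_1\times\cdots\times L_N$ tensor with the transposed $L_j\times K_j$ factor matrices along all modes $j\neq n$, reusing intermediate results along shared tree paths.) *)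

From mathcomp Require Import all_boot all_order all_algebra.
Set Implicit Arguments. Unset Strict Implicit. Unset Printing Implicit Defensive.
Import Order.TTheory GRing.Theory Num.Theory.

(* Modes are encoded 0-indexed: mode j (paper) is the natural number j-1 < N. *)

Inductive tnode : Type := Node of nat & seq tnode.

(* A TTM-tree is given by the list of the children of its root
   (the root carries the special label "input tensor"). *)
Definition ttm_tree := seq tnode.

(* For each leaf below a node, the pair (labels of the internal nodes on the
   path from that node (inclusive, if internal) down to the leaf (exclusive),
   label of the leaf). *)
Fixpoint leaf_paths (t : tnode) : seq (seq nat * nat) :=
  match t with
  | Node n ch =>
      if ch is [::] then [:: ([::], n)] else
      (fix go (l : seq tnode) :=
         match l with
         | [::] => [::]
         | x :: xs => map (fun pr => (n :: pr.1, pr.2)) (leaf_paths x) ++ go xs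
         end) ch
  end.

Definition ttm_paths (T : ttm_tree) : seq (seq nat * nat) :=
  flatten (map leaf_paths T).

Definition is_ttm (N : nat) (T : ttm_tree) : Prop :=
  perm_eq (map snd (ttm_paths T)) (iota 0 N) /\
  forall p n, (p, n) \in ttm_paths T ->
    [/\ size p = N.-1, all (fun m => m < N) p &
        forall m, m < N -> m != n -> m \in p].

Fixpoint node_binary (t : tnode) : bool :=
  match t with
  | Node _ ch =>
      (size ch <= 2) &&
      (fix go (l : seq tnode) :=
         match l with [::] => true | x :: xs => node_binary x && go xs end) ch
  end.

Definition is_binary (T : ttm_tree) : bool := (size T <= 2) && all node_binary T.

Local Open Scope ring_scope.

(* cost of the subtree rooted at node t, whose parent has cardinality c *)
Fixpoint node_cost (L K : nat -> nat) (c : rat) (t : tnode) : rat :=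
  match t with
  | Node n ch =>
      if ch is [::] then 0 else
      (K n)%:R * c +
      (fix go (l : seq tnode) :=
         match l with
         | [::] => 0
         | x :: xs => node_cost L K (((K n)%:R / (L n)%:R) * c) x + go xs
         end) ch
  end.

Definition ttm_cost (N : nat) (L K : nat -> nat) (T : ttm_tree) : rat :=
  \sum_(t <- T) node_cost L K (\prod_(j < N) (L j)%:R) t.

From mathcomp Require Import all_boot all_order all_algebra.
From mathcomp Require Import ring lra.
From Stdlib Require Import Classical Wf_nat.
From Stdlib Require List.
Import Order.TTheory GRing.Theory Num.Theory.
Set Implicit Arguments. Unset Strict Implicit. Unset Printing Implicit Defensive.
Local Open Scope ring_scope.

(* Any TTM-tree can be binarised without increasing its cost.  Below a node
   the remaining modes form a set R, and the children of the node form a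
   forest in which every leaf path is a permutation of R.  If such a forest
   has three roots, the first one is an internal node labelled m, and one of
   the other two, say t, does not contain the leaf m, so every path of t
   passes through a node labelled m.  Delete these nodes from t and graft
   what remains below the first root: the cardinality entering each remaining
   node of t gets multiplied by K_m/L_m <= 1 and the deleted nodes cost
   nothing anymore, so the cost does not increase.  Repeating this at the
   root and recursing into the children (with m removed from R) gives a
   binary tree.  Finally, scaled by prod_j L_j all costs are natural numbers,
   so a minimum-cost TTM-tree exists, and its binarisation is still optimal. *)

(* The principle generated for the nested type [tnode] has no hypothesis on
   the children. *)
Definition tnode_ind_In (P : tnode -> Prop)
  (IH : forall n ch, (forall x, List.In x ch -> P x) -> P (Node n ch)) :
  forall t, P t :=
  fix F t := match t with Node n ch => IH n ch
    ((fix G (l : seq tnode) : forall x, List.In x l -> P x :=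
       match l return forall x, List.In x l -> P x with
       | [::] => fun x (hx : List.In x [::]) => False_ind _ hx
       | y :: ys => fun x hx => match hx with
                    | or_introl e => eq_ind y P (F y) x e
                    | or_intror h => G ys x h end end) ch) end.

Lemma eq_In_map (A B : Type) (f g : A -> B) (s : seq A) :
  (forall x, List.In x s -> f x = g x) -> map f s = map g s.
Proof.
elim: s => //= y s IH fg; rewrite fg; last by left.
by rewrite IH // => x sx; apply: fg; right.
Qed.

Lemma ler_sum_In (R : numDomainType) (A : Type) (f g : A -> R) (s : seq A) :
  (forall x, List.In x s -> f x <= g x) -> \sum_(x <- s) f x <= \sum_(x <- s) g x.
Proof.
elim: s => [|y s IH] fg; first by rewrite !big_nil.
rewrite !big_cons lerD //; first by apply: fg; left.
by apply: IH => x sx; apply: fg; right.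
Qed.

Lemma sumr_ge0_In (R : numDomainType) (A : Type) (f : A -> R) (s : seq A) :
  (forall x, List.In x s -> 0 <= f x) -> 0 <= \sum_(x <- s) f x.
Proof.
by move=> f_ge0; apply: le_trans (ler_sum_In (f := fun => 0) f_ge0); rewrite big1.
Qed.

Lemma sumr_In_nat (R : pzSemiRingType) (A : Type) (f : A -> R) (s : seq A) :
  (forall x, List.In x s -> exists k : nat, f x = k%:R) ->
  exists k : nat, \sum_(x <- s) f x = k%:R.
Proof.
elim: s => [|y s IH] f_nat; first by exists 0%N; rewrite big_nil.
have [k1 e1] := f_nat y (or_introl erefl).
have [k2 e2] := IH (fun x sx => f_nat x (or_intror sx)).
by exists (k1 + k2)%N; rewrite big_cons e1 e2 natrD.
Qed.

Lemma perm_cons_rem (T : eqType) (m : T) (s R : seq T) :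
  m \in R -> perm_eq (m :: s) R = perm_eq s (rem m R).
Proof. by move=> mR; rewrite (permPr (perm_to_rem mR)) perm_cons. Qed.

Lemma ttm_paths_cons t F : ttm_paths (t :: F) = leaf_paths t ++ ttm_paths F.
Proof. by []. Qed.

Lemma ttm_paths_cat F G : ttm_paths (F ++ G) = ttm_paths F ++ ttm_paths G.
Proof. by rewrite /ttm_paths map_cat flatten_cat. Qed.

Lemma ttm_paths_flatten Fs : ttm_paths (flatten Fs) = flatten (map ttm_paths Fs).
Proof. by elim: Fs => //= F Fs IH; rewrite ttm_paths_cat IH. Qed.

Lemma leaf_pathsE n ch : leaf_paths (Node n ch) =
  if ch is [::] then [:: ([::], n)] else [seq (n :: pr.1, pr.2) | pr <- ttm_paths ch].
Proof.
case: ch => [//|x xs] /=; rewrite /ttm_paths /= map_cat; congr (_ ++ _).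
by elim: xs => //= y ys ->; rewrite map_cat.
Qed.

Lemma node_binaryE n ch : node_binary (Node n ch) = (size ch <= 2)%N && all node_binary ch.
Proof. by rewrite /=; congr andb; elim: ch => //= x xs ->. Qed.

Lemma leaf_paths_neq0 t : leaf_paths t != [::].
Proof.
elim/tnode_ind_In: t => n [|x xs] IH; rewrite leaf_pathsE // map_cat.
by have := IH x (or_introl erefl); case: (leaf_paths x).
Qed.

Lemma nilp_ttm_paths F : nilp (ttm_paths F) = nilp F.
Proof.
case: F => // t F; rewrite ttm_paths_cons.
by have := leaf_paths_neq0 t; case: (leaf_paths t).
Qed.

Lemma exists_leaf_path t : exists pr, pr \in leaf_paths t.
Proof.
have := leaf_paths_neq0 t; case: (leaf_paths t) => [|pr ?] // _.
by exists pr; apply: mem_head.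
Qed.

Lemma exists_ttm_path x xs : exists pr, pr \in ttm_paths (x :: xs).
Proof.
have [pr hpr] := exists_leaf_path x.
by exists pr; rewrite ttm_paths_cons mem_cat hpr.
Qed.

Lemma In_ttm_paths y F pr : List.In y F -> pr \in leaf_paths y -> pr \in ttm_paths F.
Proof.
elim: F => //= z zs IH [<-|hy] hpr; rewrite ttm_paths_cons mem_cat ?hpr //.
by rewrite IH ?orbT.
Qed.

Lemma mem_leaf_paths_node n ch pr :
  pr \in ttm_paths ch -> (n :: pr.1, pr.2) \in leaf_paths (Node n ch).
Proof.
case: ch => [//|x xs] h; rewrite leaf_pathsE.
exact: (map_f (fun pr => (n :: pr.1, pr.2)) h).
Qed.

Fixpoint contract (m : nat) (t : tnode) : seq tnode :=
  match t with Node n ch =>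
    if ch is [::] then [:: t] else
    if n == m then flatten (map (contract m) ch)
    else [:: Node n (flatten (map (contract m) ch))] end.

Lemma contract_node m n x xs : contract m (Node n (x :: xs)) =
  if n == m then flatten (map (contract m) (x :: xs))
  else [:: Node n (flatten (map (contract m) (x :: xs)))].
Proof. by []. Qed.

Definition drop_label (m : nat) (pr : seq nat * nat) := ([seq k <- pr.1 | k != m], pr.2).

Lemma ttm_paths_contract m t :
  ttm_paths (contract m t) = map (drop_label m) (leaf_paths t).
Proof.
elim/tnode_ind_In: t => n [|x xs] IH; first by [].
rewrite contract_node leaf_pathsE -map_comp.
set F := flatten _; have eF : ttm_paths F = map (drop_label m) (ttm_paths (x :: xs)).
  rewrite ttm_paths_flatten -map_comp (eq_In_map IH).
  by rewrite /ttm_paths map_flatten -map_comp.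
have : ~~ nilp F by rewrite -nilp_ttm_paths eF /nilp size_map -/(nilp _) nilp_ttm_paths.
case: eqP => [->|/eqP nm] F_neq0.
  by rewrite eF; apply: eq_map => -[p k]; rewrite /drop_label /= eqxx.
rewrite ttm_paths_cons cats0 leaf_pathsE; case: F F_neq0 eF => [|y ys] // _ ->.
by rewrite -map_comp; apply: eq_map => -[p k]; rewrite /drop_label /= nm.
Qed.

Lemma contract_id m t :
  (forall pr, pr \in leaf_paths t -> m \notin pr.1) -> contract m t = [:: t].
Proof.
elim/tnode_ind_In: t => n [|x xs] IH m_free //.
have nm : n != m.
  have [pr hpr] := exists_ttm_path x xs.
  by have := m_free _ (mem_leaf_paths_node n hpr); rewrite inE negb_or eq_sym => /andP[].
rewrite contract_node (negbTE nm); congr [:: Node n _].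
rewrite (eq_In_map (g := fun y => [:: y])) ?flatten_map1 ?map_id // => y hy.
apply: IH => // pr hpr; have := m_free _ (mem_leaf_paths_node n (In_ttm_paths hy hpr)).
by rewrite inE negb_or => /andP[].
Qed.

Definition tree_on (R : seq nat) (t : tnode) :=
  all (fun pr => perm_eq (pr.2 :: pr.1) R) (leaf_paths t).
Definition forest_on (R : seq nat) (F : seq tnode) :=
  all (fun pr => perm_eq (pr.2 :: pr.1) R) (ttm_paths F).
Definition tree_leaves t := map snd (leaf_paths t).
Definition forest_leaves F := map snd (ttm_paths F).

Lemma forest_on_cons R t F : forest_on R (t :: F) = tree_on R t && forest_on R F.
Proof. by rewrite /forest_on ttm_paths_cons all_cat. Qed.

Lemma forest_on_In R F t : forest_on R F -> List.In t F -> tree_on R t.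
Proof.
elim: F => //= u F IH; rewrite forest_on_cons => /andP[Ru RF] [<-|tF] //.
exact: IH.
Qed.

Lemma forest_leaves_cons t F : forest_leaves (t :: F) = tree_leaves t ++ forest_leaves F.
Proof. by rewrite /forest_leaves ttm_paths_cons map_cat. Qed.

Lemma nilp_forest_leaves F : nilp (forest_leaves F) = nilp F.
Proof. by rewrite /forest_leaves /nilp size_map -/(nilp _) nilp_ttm_paths. Qed.

Lemma tree_leaves_node m x xs : tree_leaves (Node m (x :: xs)) = forest_leaves (x :: xs).
Proof. by rewrite /tree_leaves leaf_pathsE -map_comp. Qed.

Lemma tree_on_node R m x xs :
  tree_on R (Node m (x :: xs)) = (m \in R) && forest_on (rem m R) (x :: xs).
Proof.
rewrite /tree_on leaf_pathsE all_map /forest_on.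
case mR: (m \in R) => /=.
  apply: eq_all => -[p n] /=.
  by rewrite -perm_cons_rem // (perm_catCA [:: n] [:: m] p).
have [pr hpr] := exists_ttm_path x xs.
apply/negbTE/negP => /allP /(_ _ hpr) /= /perm_mem /(_ m).
by rewrite !inE eqxx orbT mR.
Qed.

Lemma tree_on_leaf R m : tree_on R (Node m [::]) = perm_eq [:: m] R.
Proof. by rewrite /tree_on /= andbT. Qed.

Lemma tree_on_uniq R t pr :
  uniq R -> tree_on R t -> pr \in leaf_paths t -> uniq (pr.2 :: pr.1).
Proof. by move=> uR /allP Rt /Rt /perm_uniq ->. Qed.

Definition graft m ch t := Node m (ch ++ contract m t).

Lemma tree_leaves_graft m x xs t :
  tree_leaves (graft m (x :: xs) t) = tree_leaves (Node m (x :: xs)) ++ tree_leaves t.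
Proof.
rewrite /tree_leaves !leaf_pathsE ttm_paths_cat ttm_paths_contract !map_cat -!map_comp.
by congr (_ ++ _).
Qed.

Lemma tree_on_graft R m x xs t : uniq R ->
  tree_on R (Node m (x :: xs)) -> tree_on R t -> m \notin tree_leaves t ->
  tree_on R (graft m (x :: xs) t).
Proof.
move=> uR Rm Rt m_notin_t.
have mR : m \in R by move: Rm; rewrite tree_on_node => /andP[].
rewrite /tree_on leaf_pathsE ttm_paths_cat ttm_paths_contract map_cat all_cat.
apply/andP; split; first by move: Rm; rewrite /tree_on leaf_pathsE.
apply/allP => _ /mapP [_ /mapP [[p n] hpn ->] ->] /=.
have pe : perm_eq (n :: p) R by move/allP: Rt => /(_ _ hpn).
have nm : n != m by apply: contraNneq m_notin_t => <-; apply: (map_f snd hpn).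
have mp : m \in p by move: (perm_mem pe m); rewrite mR inE eq_sym (negbTE nm).
have up : uniq p by have /andP[] := tree_on_uniq uR Rt hpn.
apply: perm_trans pe; rewrite perm_cons perm_sym -rem_filter //.
exact: perm_to_rem.
Qed.

Section Cost.
Variables (L K : nat -> nat).
Local Notation node_cost := (node_cost L K).

Definition ratio n : rat := (K n)%:R / (L n)%:R.
Definition forest_cost c (F : seq tnode) := \sum_(t <- F) node_cost c t.

Lemma ratio_ge0 n : 0 <= ratio n.
Proof. by rewrite /ratio divr_ge0. Qed.

Lemma node_costE c n ch : node_cost c (Node n ch) =
  if ch is [::] then 0 else (K n)%:R * c + forest_cost (ratio n * c) ch.
Proof.
case: ch => [//|x xs] /=; rewrite /forest_cost big_cons; congr (_ + (_ + _)).
by elim: xs => [|y ys IH] /=; rewrite ?big_nil ?big_cons ?IH.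
Qed.

Lemma forest_cost_nil c : forest_cost c [::] = 0.
Proof. exact: big_nil. Qed.

Lemma forest_cost_cons c t F : forest_cost c (t :: F) = node_cost c t + forest_cost c F.
Proof. by rewrite /forest_cost big_cons. Qed.

Lemma forest_cost_cat c F G : forest_cost c (F ++ G) = forest_cost c F + forest_cost c G.
Proof. by rewrite /forest_cost big_cat. Qed.

Lemma forest_cost_flatten c Fs :
  forest_cost c (flatten Fs) = \sum_(F <- Fs) forest_cost c F.
Proof. by rewrite /forest_cost big_flatten. Qed.

Lemma node_cost_ge0 c t : 0 <= c -> 0 <= node_cost c t.
Proof.
elim/tnode_ind_In: t c => n [|x xs] IH c c_ge0; rewrite node_costE //.
rewrite addr_ge0 ?mulr_ge0 //; apply: sumr_ge0_In => y hy.
by apply: IH => //; apply: mulr_ge0 (ratio_ge0 _) c_ge0.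
Qed.

Lemma forest_cost_ge0 c F : 0 <= c -> 0 <= forest_cost c F.
Proof. by move=> c_ge0; rewrite /forest_cost sumr_ge0 // => t _; apply: node_cost_ge0. Qed.

Lemma contract_cost m t c : 0 <= c -> ratio m <= 1 ->
  (forall pr, pr \in leaf_paths t -> uniq pr.1) ->
  forest_cost (ratio m * c) (contract m t) <= node_cost c t.
Proof.
elim/tnode_ind_In: t c => n [|x xs] IH c c_ge0 m_le1 uniq_t.
  by rewrite /= forest_cost_cons forest_cost_nil addr0.
have uniq_ch y : List.In y (x :: xs) -> forall pr, pr \in leaf_paths y -> uniq (n :: pr.1).
  by move=> hy pr hpr; apply: uniq_t (mem_leaf_paths_node n (In_ttm_paths hy hpr)).
rewrite contract_node [node_cost c _]node_costE.
case: (eqVneq n m) => [<-|nm].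
  rewrite (eq_In_map (g := fun y => [:: y])) ?flatten_map1 ?map_id.
    by rewrite lerDr mulr_ge0.
  move=> y hy; apply: contract_id => pr hpr.
  by have /andP[] := uniq_ch y hy pr hpr.
rewrite forest_cost_cons forest_cost_nil addr0 node_costE.
case e: (flatten _) => [|z zs].
  by rewrite addr_ge0 ?mulr_ge0 // forest_cost_ge0 // mulr_ge0 // ratio_ge0.
rewrite -e forest_cost_flatten big_map lerD ?ler_wpM2l ?ler_piMl //.
apply: ler_sum_In => y hy; rewrite mulrCA; apply: IH => //.
- exact: mulr_ge0 (ratio_ge0 _) c_ge0.
- by move=> pr hpr; have /andP[] := uniq_ch y hy pr hpr.
Qed.

Lemma graft_cost R m x xs t c : uniq R -> ratio m <= 1 -> 0 <= c -> tree_on R t ->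
  node_cost c (graft m (x :: xs) t) <= node_cost c (Node m (x :: xs)) + node_cost c t.
Proof.
move=> uR m_le1 c_ge0 Rt.
rewrite !node_costE forest_cost_cat -addrA !lerD2l.
apply: contract_cost => // pr hpr.
by have /andP[] := tree_on_uniq uR Rt hpr.
Qed.

Lemma merge_roots R F c : uniq R -> {in R, forall m, ratio m <= 1} -> 0 <= c ->
  forest_on R F -> uniq (forest_leaves F) -> (2 < size F)%N ->
  exists F', [/\ forest_on R F', perm_eq (forest_leaves F') (forest_leaves F),
                 (size F' < size F)%N & forest_cost c F' <= forest_cost c F].
Proof.
move=> uR R_le1 c_ge0.
case: F => [|t1 [|t2 [|t3 F]]] // RF uF _.
move: RF uF; rewrite !forest_on_cons !forest_leaves_cons => /and4P[R1 R2 R3 RF] uF.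
case: t1 R1 uF => m [|x xs] R1 uF.
  (* A leaf root forces R = [:: m], so t2 would contain the leaf m again. *)
  exfalso; have [[p n] hpn] := exists_leaf_path t2.
  have : n \in [:: m].
    rewrite tree_on_leaf in R1; rewrite (perm_mem R1).
    by rewrite -(perm_mem (allP R2 _ hpn)) mem_head.
  rewrite inE => /eqP n_eq_m; move: uF; rewrite cat_uniq => /and3P[_ /negP[]].
  apply/hasP; exists n; first by rewrite mem_cat /tree_leaves (map_f snd hpn).
  by rewrite /= n_eq_m mem_head.
have m_le1 : ratio m <= 1 by apply: R_le1; move: R1; rewrite tree_on_node => /andP[].
have [m_in_t2|m_notin_t2] := boolP (m \in tree_leaves t2).
  have m_notin_t3 : m \notin tree_leaves t3.
    move: uF; rewrite tree_leaves_node !cat_uniq => /and3P[_ _ /and3P[_ + _]].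
    by apply: contraNN => m_in_t3; apply/hasP; exists m; rewrite ?mem_cat ?m_in_t3.
  exists (graft m (x :: xs) t3 :: t2 :: F); split => //.
  - by rewrite !forest_on_cons tree_on_graft ?R2.
  - rewrite !forest_leaves_cons tree_leaves_graft -catA perm_cat2l.
    exact/permPl/perm_catCA.
  - have := graft_cost x xs uR m_le1 c_ge0 R3.
    by rewrite !forest_cost_cons; lra.
exists (graft m (x :: xs) t2 :: t3 :: F); split => //.
- by rewrite !forest_on_cons tree_on_graft ?R3.
- by rewrite !forest_leaves_cons tree_leaves_graft -catA.
- have := graft_cost x xs uR m_le1 c_ge0 R2.
  by rewrite !forest_cost_cons; lra.
Qed.

Lemma reduce_roots R c F : uniq R -> {in R, forall m, ratio m <= 1} -> 0 <= c ->
  forest_on R F -> uniq (forest_leaves F) ->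
  exists F', [/\ forest_on R F', perm_eq (forest_leaves F') (forest_leaves F),
                 (size F' <= 2)%N & forest_cost c F' <= forest_cost c F].
Proof.
move=> uR R_le1 c_ge0; have [k] := ubnP (size F); elim: k F => // k IH F ltFk RF uF.
have [le2|gt2] := leqP (size F) 2; first by exists F.
have [F1 [RF1 pF1 ltF1 cF1]] := merge_roots uR R_le1 c_ge0 RF uF gt2.
have uF1 : uniq (forest_leaves F1) by rewrite (perm_uniq pF1).
have [F2 [RF2 pF2 leF2 cF2]] := IH F1 (leq_trans ltF1 ltFk) RF1 uF1.
by exists F2; split => //; [apply: perm_trans pF2 pF1 | apply: le_trans cF2 cF1].
Qed.

Definition binarizable R := forall F c, 0 <= c -> forest_on R F -> uniq (forest_leaves F) ->
  exists F', [/\ forest_on R F', perm_eq (forest_leaves F') (forest_leaves F),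
                 is_binary F' & forest_cost c F' <= forest_cost c F].

Section Binarize.
Variable R : seq nat.
Hypothesis binarizable_rem : {in R, forall m, binarizable (rem m R)}.

Lemma binarize_tree t c : 0 <= c -> tree_on R t -> uniq (tree_leaves t) ->
  exists t', [/\ tree_on R t', perm_eq (tree_leaves t') (tree_leaves t),
                 node_binary t' & node_cost c t' <= node_cost c t].
Proof.
case: t => m [|x xs] c_ge0 Rt ut; first by exists (Node m [::]).
move: Rt ut; rewrite tree_on_node tree_leaves_node => /andP[mR Rch] uch.
have [[|y ys] [Rch' pch' bch' cch']] :=
  binarizable_rem mR (mulr_ge0 (ratio_ge0 m) c_ge0) Rch uch.
  by move: (perm_size pch') (nilp_forest_leaves (x :: xs)); rewrite /nilp => <-.
exists (Node m (y :: ys)); split.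
- by rewrite tree_on_node mR.
- by rewrite !tree_leaves_node.
- by rewrite node_binaryE.
- by rewrite !node_costE lerD2l.
Qed.

Lemma binarize_roots c F : 0 <= c -> forest_on R F -> uniq (forest_leaves F) ->
  exists F', [/\ forest_on R F', perm_eq (forest_leaves F') (forest_leaves F),
                 size F' = size F, all node_binary F' &
                 forest_cost c F' <= forest_cost c F].
Proof.
move=> c_ge0; elim: F => [|t F IH]; first by exists [::].
rewrite forest_on_cons forest_leaves_cons cat_uniq => /andP[Rt RF] /and3P[ut _ uF].
have [t' [Rt' pt' bt' ct']] := binarize_tree c_ge0 Rt ut.
have [F' [RF' pF' sF' bF' cF']] := IH RF uF.
exists (t' :: F'); split => /=.
- by rewrite forest_on_cons Rt' RF'.
- by rewrite !forest_leaves_cons perm_cat.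
- by rewrite sF'.
- by rewrite bt' bF'.
- by rewrite !forest_cost_cons lerD.
Qed.

Lemma binarizable_from_rem : uniq R -> {in R, forall m, ratio m <= 1} -> binarizable R.
Proof.
move=> uR R_le1 F c c_ge0 RF uF.
have [F1 [RF1 pF1 sF1 cF1]] := reduce_roots uR R_le1 c_ge0 RF uF.
have uF1 : uniq (forest_leaves F1) by rewrite (perm_uniq pF1).
have [F2 [RF2 pF2 sF2 bF2 cF2]] := binarize_roots c_ge0 RF1 uF1.
exists F2; split => //.
- exact: perm_trans pF2 pF1.
- by rewrite /is_binary sF2 sF1 bF2.
- exact: le_trans cF2 cF1.
Qed.

End Binarize.

Lemma binarizable_uniq R : uniq R -> {in R, forall m, ratio m <= 1} -> binarizable R.
Proof.
elim: {R}(size R) {-2}R (leqnn (size R)) => [|k IH] R leRk uR R_le1.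
  by apply: binarizable_from_rem => // m; move: leRk; rewrite leqn0 => /nilP ->.
apply: binarizable_from_rem => // m mR; apply: IH.
- by rewrite size_rem // -subn1 leq_subLR add1n.
- exact: rem_uniq.
- by move=> m' /mem_rem; apply: R_le1.
Qed.

Lemma node_cost_nat t R X : {in R, forall m, 0 < L m}%N -> tree_on R t ->
  exists k : nat, node_cost (X * \prod_(j <- R) L j)%N%:R t = k%:R.
Proof.
elim/tnode_ind_In: t R X => m [|x xs] IH R X L_gt0; first by exists 0%N.
rewrite tree_on_node node_costE => /andP[mR Rch].
have -> : ratio m * (X * \prod_(j <- R) L j)%N%:R
          = (X * K m * \prod_(j <- rem m R) L j)%N%:R.
  rewrite (perm_big _ (perm_to_rem mR)) big_cons /= /ratio !natrM.
  by field; rewrite pnatr_eq0 -lt0n L_gt0.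
have [k ->] : exists k : nat,
    forest_cost (X * K m * \prod_(j <- rem m R) L j)%N%:R (x :: xs) = k%:R.
  apply: sumr_In_nat => y hy; apply: IH => //.
  - by move=> m' /mem_rem; apply: L_gt0.
  - exact: forest_on_In Rch hy.
by exists (K m * (X * \prod_(j <- R) L j) + k)%N; rewrite natrD [(K m * _)%:R]natrM.
Qed.

Lemma forest_cost_nat F R : {in R, forall m, 0 < L m}%N -> forest_on R F ->
  exists k : nat, forest_cost (\prod_(j <- R) L j)%:R F = k%:R.
Proof.
move=> L_gt0 RF; apply: sumr_In_nat => t tF.
by have := node_cost_nat 1 L_gt0 (forest_on_In RF tF); rewrite mul1n.
Qed.

End Cost.

Fixpoint chain (s : seq nat) (n : nat) : tnode :=
  if s is m :: s' then Node m [:: chain s' n] else Node n [::].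

Lemma leaf_paths_chain s n : leaf_paths (chain s n) = [:: (s, n)].
Proof. by elim: s => // m s IH; rewrite [chain _ _]/= leaf_pathsE ttm_paths_cons IH. Qed.

Lemma is_ttmP N T : (0 < N)%N -> is_ttm N T <->
  forest_on (iota 0 N) T /\ perm_eq (forest_leaves T) (iota 0 N).
Proof.
move=> N_gt0; split=> [[leavesT pathsT] | [RT leavesT]]; last first.
  split=> // p n hpn; have pe : perm_eq (n :: p) (iota 0 N) by move/allP: RT => /(_ _ hpn).
  split=> [|/=|m ltmN nm].
  - by have := perm_size pe; rewrite size_iota /= => <-.
  - by apply/allP => m mp; have := perm_mem pe m; rewrite inE mp orbT mem_iota => /esym.
  - by have := perm_mem pe m; rewrite mem_iota ltmN inE (negbTE nm) /= => ->.
split=> //; apply/allP => -[p n] hpn /=.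
have [size_p _ cover_p] := pathsT p n hpn.
have ltnN : (n < N)%N.
  by have := map_f snd hpn; rewrite -/(forest_leaves T) (perm_mem leavesT) mem_iota.
have sub : {subset iota 0 N <= n :: p}.
  move=> m; rewrite mem_iota add0n inE => ltmN.
  by case: eqVneq => //= nm; apply: cover_p.
have le_size : (size (n :: p) <= size (iota 0 N))%N by rewrite /= size_p size_iota prednK.
have [eq_size eq_mem] := uniq_min_size (iota_uniq 0 N) sub le_size.
have uniq_np : uniq (n :: p) by rewrite (uniq_size_uniq (iota_uniq 0 N) eq_mem) eq_size.
by apply: uniq_perm; rewrite ?iota_uniq.
Qed.

Lemma exists_ttm N : (0 < N)%N -> exists T, is_ttm N T.
Proof.
move=> N_gt0; set R := iota 0 N.
have pathsT s : ttm_paths [seq chain (rem n R) n | n <- s] = [seq (rem n R, n) | n <- s].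
  by elim: s => //= n s IH; rewrite ttm_paths_cons leaf_paths_chain IH.
exists [seq chain (rem n R) n | n <- R]; apply/is_ttmP => //; split.
- by rewrite /forest_on pathsT all_map; apply/allP => n nR /=; rewrite perm_sym perm_to_rem.
- by rewrite /forest_leaves pathsT -map_comp map_id.
Qed.

Lemma ttm_costE N L K T :
  ttm_cost N L K T = forest_cost L K (\prod_(j <- iota 0 N) L j)%:R T.
Proof.
by rewrite /ttm_cost natr_prod -(big_mkord xpredT (fun j => (L j)%:R)) /index_iota subn0.
Qed.

Lemma ttm_cost_nat N L K T : (0 < N)%N -> (forall n, (n < N)%N -> (0 < L n)%N) ->
  is_ttm N T -> exists k : nat, ttm_cost N L K T = k%:R.
Proof.
move=> N_gt0 L_gt0 /(is_ttmP _ N_gt0)[RT _]; rewrite ttm_costE.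
by apply: forest_cost_nat RT => m; rewrite mem_iota => /L_gt0.
Qed.

Lemma exists_optimal_ttm N L K : (0 < N)%N -> (forall n, (n < N)%N -> (0 < L n)%N) ->
  exists2 T, is_ttm N T & forall T', is_ttm N T' -> ttm_cost N L K T <= ttm_cost N L K T'.
Proof.
move=> N_gt0 L_gt0; pose attained k := exists2 T, is_ttm N T & ttm_cost N L K T = k%:R.
have [T0 T0_ttm] := exists_ttm N_gt0.
have [k0 cost0] := ttm_cost_nat K N_gt0 L_gt0 T0_ttm.
have [kmin [[[T T_ttm costT] kmin_le] _]] :=
  dec_inh_nat_subset_has_unique_least_element attained (fun k => classic (attained k))
    (ex_intro attained k0 (ex_intro2 _ _ T0 T0_ttm cost0)).
exists T => // T' T'_ttm; have [k' cost'] := ttm_cost_nat K N_gt0 L_gt0 T'_ttm.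
by rewrite costT cost' ler_nat; apply/ssrnat.leP/kmin_le; exists T'.
Qed.

Theorem lemma1 (N : nat) (L K : nat -> nat) :
  (1 <= N)%N ->
  (forall n, (n < N)%N -> (0 < K n)%N /\ (K n <= L n)%N) ->
  exists T : ttm_tree,
    [/\ is_ttm N T, is_binary T &
        forall T' : ttm_tree, is_ttm N T' -> ttm_cost N L K T <= ttm_cost N L K T'].
Proof.
move=> N_gt0 KL.
have L_gt0 n : (n < N)%N -> (0 < L n)%N by case/KL => K_gt0; apply: leq_trans.
have ratio_le1 : {in iota 0 N, forall m, ratio L K m <= 1}.
  move=> m; rewrite mem_iota /= => /KL[K_gt0 K_le_L].
  by rewrite /ratio ler_pdivrMr ?ltr0n ?(leq_trans K_gt0) // mul1r ler_nat.
have [Topt Topt_ttm Topt_min] := exists_optimal_ttm K N_gt0 L_gt0.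
have [RTopt leavesTopt] := (is_ttmP _ N_gt0).1 Topt_ttm.
have c_ge0 : 0 <= (\prod_(j <- iota 0 N) L j)%:R :> rat by apply: ler0n.
have [T [RT leavesT binT costT]] := binarizable_uniq (iota_uniq 0 N) ratio_le1
  c_ge0 RTopt (etrans (perm_uniq leavesTopt) (iota_uniq 0 N)).
exists T; split => //.
- by apply/is_ttmP => //; split => //; apply: perm_trans leavesT leavesTopt.
- by move=> T' T'_ttm; rewrite ttm_costE (le_trans costT) // -ttm_costE Topt_min.
Qed.
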